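(* For every integer $r\ge 3$ and every integer $n>6^r$, $$g(r,n)\leq n-\frac{1}{12r}n^{\frac{r-1}{r}}.$$
   Context: A hypergraph is $r$-uniform if every edge contains exactly $r$ vertices. An $r$-uniform hypergraph is $r$-partite if its vertex set can be partitioned into $r$ sets $V_1,\dots,V_r$ such that every edge contains exactly one vertex from each $V_i$. A matching is a set of pairwise vertex-disjoint edges. Given a collection (repetitions allowed) of matchings $M_1,\dots,M_n$ in a hypergraph, a matching $M\subseteq \bigcup_{i=1}^n M_i$ is rainbow if there is an injection $\phi:M\to[n]$ such that every edge $e\in M$ belongs to $M_{\phi(e)}$. $g(r,n)$ denotes the largest integer $s$ such that every collection of $n$ matchings, each of size $n$, in an $r$-partite $r$-uniform hypergraph admits a rainbow matching of size $s$. *)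

From mathcomp Require Import all_boot.
From Stdlib Require Import ClassicalEpsilon.
Set Implicit Arguments. Unset Strict Implicit. Unset Printing Implicit Defensive.

Definition r_partite_uniform (r : nat) (V : finType) (H : {set {set V}}) : Prop :=
  (forall e, e \in H -> #|e| = r) /\
  exists part : V -> 'I_r,
    forall e, e \in H -> forall i : 'I_r, #|[set v in e | part v == i]| = 1.

Definition is_matching (V : finType) (M : {set {set V}}) : Prop :=
  forall e f, e \in M -> f \in M -> e != f -> [disjoint e & f].

Definition rainbow_matching (V : finType) (n : nat) (M : 'I_n -> {set {set V}})
    (R : {set {set V}}) : Prop :=
  R \subset \bigcup_(i < n) M i /\ is_matching R /\
  exists phi : {set V} -> 'I_n,
    {in R &, injective phi} /\ forall e, e \in R -> e \in M (phi e).

Definition all_admit (r n s : nat) : Prop :=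
  forall (V : finType) (H : {set {set V}}) (M : 'I_n -> {set {set V}}),
    r_partite_uniform r H ->
    (forall i, M i \subset H) ->
    (forall i, is_matching (M i)) ->
    (forall i, #|M i| = n) ->
    exists R : {set {set V}}, rainbow_matching M R /\ #|R| = s.

Definition pbool (P : Prop) : bool :=
  if excluded_middle_informative P then true else false.

(* A rainbow matching has
   at most n edges (injection into 'I_n), so for s > n all_admit r n s fails
   (vacuously witnessed for n = 0 too, as 'I_0 is empty); hence the maximum
   may be taken over s <= n.  all_admit r n 0 holds (R = set0). *)
Definition g (r n : nat) : nat := \max_(s < n.+1 | pbool (all_admit r n s)) s.

(* Let N be odd.  On the vertices [r] x (Z_N + {oo}) consider the transversal edges
   A_x = {(j, x)}, B_x = {(0, x), (1, 2x), (2, 2x + 1), (j, x) for j >= 3} and the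
   padding edge P = {(j, oo)}.  Give n - N/2 of the n matchings the edges A_x and the
   others the edges B_x, all padded with P when n = N + 1 is even.  A rainbow matching
   uses A_x for x in a set S and B_y for y in a set T with |T| <= N/2; as A_x meets B_y
   whenever x is y, 2y or 2y + 1, the set S avoids T and its outer boundary under the
   maps y |-> 2y, 2y + 1, so the matching misses one edge per boundary point.  This
   boundary is large when N <= 2^m: any x in T is joined to any y outside T by a walk
   of m steps y |-> 2y + c_k whose carry string c determines y from x, and the pair
   (x, y) is recovered from c, the step at which the walk leaves T and the boundary
   point it reaches, so |T| |~T| <= m N |boundary T|.  The choice K = floor(n^(1/r)),
   m = K r and a deficit D = N / (6m) turns this into the stated bound. *)

From mathcomp Require Import all_boot zify.
From Stdlib Require Import ClassicalEpsilon.
Set Implicit Arguments. Unset Strict Implicit. Unset Printing Implicit Defensive.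

Lemma leq_card_in_on (T T' : finType) (f : T -> T') (A : {pred T}) (B : {pred T'}) :
  {in A &, injective f} -> {in A, forall x, f x \in B} -> #|A| <= #|B|.
Proof.
move=> f_inj fAB; rewrite -(card_in_imset f_inj); apply: subset_leq_card.
by apply/subsetP => _ /imsetP[x Ax ->]; exact: fAB.
Qed.

Lemma leq_card_rel (T T' : finType) (A : {pred T}) (B : {pred T'}) (R : T -> T' -> bool) :
  {in A, forall x, exists2 y, y \in B & R x y} ->
  {in A &, forall x x' y, R x y -> R x' y -> x = x'} -> #|A| <= #|B|.
Proof.
move=> R_total R_inj; pose f x := [pick y in B | R x y].
have fP x : x \in A -> exists2 y, f x = Some y & (y \in B) && R x y.
  move=> Ax; rewrite /f; case: pickP => [y By_Rxy | none]; first by exists y.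
  by have [y By Rxy] := R_total x Ax; have := none y; rewrite By Rxy.
rewrite -(card_imset B (@Some_inj _)); apply: (@leq_card_in_on _ _ f) => [x x' Ax Ax'|x Ax].
  have [y -> /andP[_ Rxy]] := fP x Ax; have [y' -> /andP[_ Rx'y']] := fP x' Ax'.
  by case=> eq_y; apply: (R_inj x x' Ax Ax' y); rewrite // eq_y.
by have [y -> /andP[By _]] := fP x Ax; apply: imset_f.
Qed.

Lemma exists_crossing (P : pred nat) m :
  P 0 -> ~~ P m -> exists2 j, j < m & P j && ~~ P j.+1.
Proof.
move=> P0; elim: m => [|m IHm] Pm; first by rewrite P0 in Pm.
case: (boolP (P m)) => [Pm'|/IHm[j lt_jm Pj]]; first by exists m; rewrite ?Pm' //.
by exists j => //; exact: ltnW.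
Qed.

Lemma eqn_modMl_coprime n k a b :
  coprime k n -> (k * a == k * b %[mod n]) = (a == b %[mod n]).
Proof.
move=> co_kn; wlog le_ba : a b / b <= a => [wlog_le|].
  by case: (leqP b a) => [/wlog_le//|/ltnW/wlog_le E]; rewrite eq_sym E eq_sym.
rewrite !eqn_mod_dvd ?leq_mul2l ?le_ba ?orbT // -mulnBr Gauss_dvdr //.
by rewrite coprime_sym.
Qed.

Section BinaryWalk.
Variable n : nat.

Fact ord_dbl_subproof (b : bool) (i : 'I_n) : (2 * i + b) %% n < n.
Proof. by rewrite ltn_pmod // (leq_ltn_trans _ (ltn_ord i)). Qed.
Definition ord_dbl b i : 'I_n := Ordinal (ord_dbl_subproof b i).

Lemma ord_dbl_inj b : odd n -> injective (ord_dbl b).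
Proof.
move=> n_odd x y /(congr1 val) /= /eqP.
rewrite eqn_modDr eqn_modMl_coprime ?coprime2n // !modn_small //.
by move/eqP; exact: val_inj.
Qed.

Lemma ord_dbl_neq (i : 'I_n) : 1 < n -> ord_dbl false i != ord_dbl true i.
Proof.
by move=> n_gt1; apply/eqP => /(congr1 val)/eqP /=; rewrite eqn_modDl mod0n modn_small.
Qed.

Definition boundary (T : {set 'I_n}) : {set 'I_n} :=
  (ord_dbl false @: T :|: ord_dbl true @: T) :\: T.

Lemma mem_boundary b (T : {set 'I_n}) i :
  i \in T -> ord_dbl b i \notin T -> ord_dbl b i \in boundary T.
Proof. by move=> Ti nTi; rewrite !inE nTi; case: b nTi => _; rewrite imset_f ?orbT. Qed.

(* The point reached from x after reading the first j of the m binary digits of c,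
   most significant first, each digit d acting by y |-> 2y + d. *)
Fact walk_subproof m c (x : 'I_n) j : (2 ^ j * x + c %/ 2 ^ (m - j)) %% n < n.
Proof. by rewrite ltn_pmod // (leq_ltn_trans _ (ltn_ord x)). Qed.
Definition walk m c x j : 'I_n := Ordinal (walk_subproof m c x j).

Lemma walk0 m c x : c < 2 ^ m -> walk m c x 0 = x.
Proof.
by move=> lt_c; apply: val_inj; rewrite /= subn0 divn_small // mul1n addn0 modn_small.
Qed.

Lemma walk_last m c x : val (walk m c x m) = (2 ^ m * x + c) %% n.
Proof. by rewrite /= subnn divn1. Qed.

Lemma walkS m c x j : j < m ->
  walk m c x j.+1 = ord_dbl (odd (c %/ 2 ^ (m - j.+1))) (walk m c x j).
Proof.
move=> lt_jm; apply: val_inj => /=; rewrite -[RHS]modnDml modnMmr modnDml.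
have -> : m - j = (m - j.+1).+1 by lia.
rewrite (expnSr 2 (m - j.+1)) divnMA; set q := c %/ 2 ^ (m - j.+1).
by rewrite {1}(divn_eq q 2) modn2 expnS mulnDr mulnA (mulnC 2 (q %/ 2)) addnA.
Qed.

Lemma walk_inj m c j : odd n -> injective (walk m c ^~ j).
Proof.
move=> n_odd x y /(congr1 val) /= /eqP.
rewrite eqn_modDr eqn_modMl_coprime ?coprimeXl ?coprime2n // !modn_small //.
by move/eqP; exact: val_inj.
Qed.

Lemma walk_onto m (x y : 'I_n) : exists c : 'I_n, walk m c x m = y.
Proof.
have endpoint_inj : injective (fun c : 'I_n => walk m c x m).
  move=> c c' /(congr1 val); rewrite !walk_last => /eqP.
  by rewrite eqn_modDl !modn_small // => /eqP /val_inj.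
by have [f_inv _ f_invK] := injF_bij endpoint_inj; exists (f_inv y); rewrite f_invK.
Qed.

Lemma boundary_expansion m (T : {set 'I_n}) : odd n -> n <= 2 ^ m ->
  #|T| * #|~: T| <= m * #|boundary T| * n.
Proof.
move=> n_odd le_n2m.
have card_codes : #|setX (setX [set: 'I_m] (boundary T)) [set: 'I_n]| = m * #|boundary T| * n.
  by rewrite !cardsX !cardsT !card_ord.
rewrite -cardsX -card_codes.
(* (x, y) is coded by the carry string c of a walk from x to y, a step k at which the walk
   leaves T and the boundary point w reached; w determines x, and then c determines y. *)
pose code (xy : 'I_n * 'I_n) (kwc : 'I_m * 'I_n * 'I_n) :=
  (walk m kwc.2 xy.1 m == xy.2) && (kwc.1.2 == walk m kwc.2 xy.1 kwc.1.1.+1).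
apply: (@leq_card_rel _ _ _ _ code) => [[x y]|[x y] [x' y'] _ _ [[k w] c]].
  rewrite inE /= inE => /andP[Tx nTy].
  have [c walk_xy] := walk_onto m x y.
  have lt_c : c < 2 ^ m by exact: leq_trans (ltn_ord c) le_n2m.
  pose P j := walk m c x j \in T.
  have [j lt_jm /andP[Pj nPj1]] : exists2 j, j < m & P j && ~~ P j.+1.
    by apply: exists_crossing; rewrite /P ?walk0 ?walk_xy.
  exists (Ordinal lt_jm, walk m c x j.+1, c); last by rewrite /code /= walk_xy !eqxx.
  rewrite !in_setX !in_setT andbT /=; move: nPj1; rewrite /P walkS //.
  exact: mem_boundary.
rewrite /code /= => /andP[/eqP walk_xy /eqP ->] /andP[/eqP walk_xy' /eqP].
by move/(walk_inj n_odd) => eq_x; move: walk_xy'; rewrite -eq_x walk_xy => ->.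
Qed.

End BinaryWalk.

Section Transversal.
Variables (r : nat) (K : finType).

Definition transversal (f : 'I_r -> K) : {set 'I_r * K} := [set (j, f j) | j : 'I_r].

Lemma mem_transversal f v : (v \in transversal f) = (v.2 == f v.1).
Proof.
apply/imsetP/eqP => [[j _ ->] //|eq_v]; exists v.1 => //.
by case: v eq_v => j k /= ->.
Qed.

Lemma card_transversal f : #|transversal f| = r.
Proof. by rewrite card_imset ?card_ord // => j j' [->]. Qed.

Lemma transversal_part f i : #|[set v in transversal f | v.1 == i]| = 1.
Proof.
rewrite -(cards1 (i, f i)); apply: eq_card => -[j k].
by rewrite !inE mem_transversal /= xpair_eqE andbC; case: eqP => // ->.
Qed.

Lemma transversal_inj f g : transversal f = transversal g -> f =1 g.
Proof.
move=> eq_fg j; have : (j, f j) \in transversal g by rewrite -eq_fg mem_transversal.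
by rewrite mem_transversal => /eqP.
Qed.

Lemma disjoint_transversal f g :
  [disjoint transversal f & transversal g] = [forall j, f j != g j].
Proof.
apply/pred0P/forallP => [disj j|neq_fg [j k] /=].
  by apply/eqP => eq_fg; have := disj (j, f j); rewrite /= !mem_transversal eq_fg eqxx.
rewrite !mem_transversal /=; apply/andP => -[/eqP -> /eqP eq_fg].
by move: (neq_fg j); rewrite eq_fg eqxx.
Qed.

Lemma transversal_partite (H : {set {set 'I_r * K}}) :
  {in H, forall e, exists f, e = transversal f} -> r_partite_uniform r H.
Proof.
move=> H_transversal; split=> [e /H_transversal[f ->]|]; first exact: card_transversal.
by exists fst => e /H_transversal[f ->] i; exact: transversal_part.
Qed.

End Transversal.

Section Construction.
Variables (r N : nat).

Definition a_coord (j : nat) (x : 'I_N) : 'I_N := x.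
Definition b_coord (j : nat) (x : 'I_N) : 'I_N :=
  match j with 1 => ord_dbl false x | 2 => ord_dbl true x | _ => x end.

(* The label [None] gives the padding edge, which [labels p] contains exactly when [p]. *)
Definition edge (h : nat -> 'I_N -> 'I_N) (u : option 'I_N) : {set 'I_r * option 'I_N} :=
  transversal (fun j : 'I_r => omap (h j) u).

Definition labels (p : bool) : {set option 'I_N} := [set u | p || (u != None)].

Definition hypergraph p := edge a_coord @: labels p :|: edge b_coord @: labels p.

Definition matchings p a n (i : 'I_n) :=
  edge (if i < a then a_coord else b_coord) @: labels p.

Lemma card_labels p : #|labels p| = N + p.
Proof.
case: p.
  have -> : labels true = setT by apply/setP => u; rewrite !inE.
  by rewrite cardsT card_option card_ord addn1.
have -> : labels false = [set~ None] by apply/setP => u; rewrite !inE.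
by rewrite cardsC1 card_option card_ord addn0.
Qed.

Hypothesis r_gt2 : 2 < r.
Let i0 : 'I_r := Ordinal (ltnW (ltnW r_gt2)).
Let i1 : 'I_r := Ordinal (ltnW r_gt2).
Let i2 : 'I_r := Ordinal r_gt2.

Lemma edge_inj h : injective (h 0) -> injective (edge h).
Proof. by move=> h0_inj u v /transversal_inj /(_ i0) /(inj_omap h0_inj). Qed.

Lemma disjoint_edge h u v : (forall j, injective (h j)) -> u != v ->
  [disjoint edge h u & edge h v].
Proof.
move=> h_inj neq_uv; rewrite disjoint_transversal; apply/forallP => j.
by rewrite (inj_eq (inj_omap (h_inj j))).
Qed.

Lemma matching_edges h (U : {set option 'I_N}) :
  (forall j, injective (h j)) -> is_matching (edge h @: U).
Proof.
move=> h_inj _ _ /imsetP[u _ ->] /imsetP[v _ ->] neq_e.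
by apply: disjoint_edge => //; apply: contraNneq neq_e => ->.
Qed.

Lemma card_edges h (U : {set option 'I_N}) : injective (h 0) -> #|edge h @: U| = #|U|.
Proof. by move=> h0_inj; rewrite card_imset //; exact: edge_inj. Qed.

Hypotheses (N_odd : odd N) (N_gt1 : 1 < N).

Lemma b_coord_inj j : injective (b_coord j).
Proof. by case: j => [|[|[|j]]] //= x y; exact: ord_dbl_inj. Qed.

Lemma eq_edge_a_b u v : (edge a_coord u == edge b_coord v) = (u == None) && (v == None).
Proof.
apply/eqP/andP => [/transversal_inj eq_uv|[/eqP-> /eqP->] //].
move: (eq_uv i0) (eq_uv i1) (eq_uv i2); clear eq_uv; rewrite /a_coord /=.
case: u => [x|]; case: v => [y|] //= /Some_inj -> /Some_inj e1 /Some_inj e2.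
by move: (ord_dbl_neq y N_gt1); rewrite -e1 -e2 eqxx.
Qed.

Lemma edge_a_b_meet x y (j : 'I_r) : x = b_coord j y ->
  ~~ [disjoint edge a_coord (Some x) & edge b_coord (Some y)].
Proof.
move=> eq_x; rewrite disjoint_transversal negb_forall.
by apply/existsP; exists j; rewrite negbK eq_x.
Qed.

Lemma hypergraph_partite p : r_partite_uniform r (hypergraph p).
Proof. by apply: transversal_partite => e; rewrite inE => /orP[] /imsetP[u _ ->]; eexists. Qed.

Lemma matchings_sub p a n (i : 'I_n) : matchings p a i \subset hypergraph p.
Proof. by rewrite /matchings; case: (i < a); [exact: subsetUl | exact: subsetUr]. Qed.

Lemma matching_matchings p a n (i : 'I_n) : is_matching (matchings p a i).
Proof. by apply: matching_edges; case: (i < a) => j; [move=> x y | exact: b_coord_inj]. Qed.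

Lemma card_matchings p a n (i : 'I_n) : #|matchings p a i| = N + p.
Proof. by rewrite card_edges ?card_labels //; case: (i < a). Qed.

End Construction.

Arguments a_coord {N} j x.
Arguments b_coord {N} j x.

Lemma card_ord_ltn n a : a <= n -> #|[set i : 'I_n | i < a]| = a.
Proof. by move=> le_an; rewrite -sum1dep_card big_ord_narrow // sum_nat_const card_ord muln1. Qed.

Lemma card_ord_geq n a : a <= n -> #|[set i : 'I_n | a <= i]| = n - a.
Proof.
move=> le_an; rewrite -[n in RHS](card_ord n) -(cardsC [set i : 'I_n | i < a]).
rewrite card_ord_ltn // addKn.
by apply: eq_card => i; rewrite !inE leqNgt.
Qed.

Section RainbowBound.
Variables (r N : nat) (p : bool) (a n : nat) (R : {set {set 'I_r * option 'I_N}})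
  (phi : {set 'I_r * option 'I_N} -> 'I_n).
Hypotheses (r_gt2 : 2 < r) (N_odd : odd N) (N_gt1 : 1 < N) (le_an : a <= n).
Hypotheses (R_matching : is_matching R) (phi_inj : {in R &, injective phi})
  (phi_in : forall e, e \in R -> e \in matchings r N p a (phi e)).

Let XA := [set x : 'I_N | edge r a_coord (Some x) \in R].
Let XB := [set x : 'I_N | edge r b_coord (Some x) \in R].

Lemma phi_a_edge x : x \in XA -> phi (edge r a_coord (Some x)) < a.
Proof.
rewrite inE => /phi_in; rewrite /matchings; case: ltnP => // _ /imsetP[u _ /eqP].
by rewrite eq_edge_a_b.
Qed.

Lemma phi_b_edge x : x \in XB -> a <= phi (edge r b_coord (Some x)).
Proof.
rewrite inE => /phi_in; rewrite /matchings; case: ltnP => // _ /imsetP[u _ /eqP].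
by rewrite eq_sym eq_edge_a_b // => /andP[].
Qed.

Lemma card_XA : #|XA| <= a.
Proof.
rewrite -(card_ord_ltn le_an).
apply: (@leq_card_in_on _ _ (fun x => phi (edge r a_coord (Some x)))).
  move=> x y; rewrite !inE => XAx XAy /(phi_inj XAx XAy).
  by move/(edge_inj r_gt2 (fun x y => id))/Some_inj.
by move=> x /phi_a_edge; rewrite inE.
Qed.

Lemma card_XB : #|XB| <= n - a.
Proof.
rewrite -(card_ord_geq le_an).
apply: (@leq_card_in_on _ _ (fun x => phi (edge r b_coord (Some x)))).
  move=> x y; rewrite !inE => XBx XBy /(phi_inj XBx XBy).
  by move/(edge_inj r_gt2 (@b_coord_inj _ N_odd 0))/Some_inj.
by move=> x /phi_b_edge; rewrite inE.
Qed.

Lemma rainbow_sub_hypergraph : R \subset hypergraph r N p.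
Proof. by apply/subsetP => e /phi_in; apply/subsetP; exact: matchings_sub. Qed.

Lemma card_rainbow : #|R| <= #|XA| + #|XB| + p.
Proof.
have R_sub : R \subset [set edge r a_coord (Some x) | x in XA]
    :|: [set edge r b_coord (Some x) | x in XB] :|: (if p then [set edge r a_coord None] else set0).
  apply/subsetP => e Re; have := subsetP rainbow_sub_hypergraph e Re.
  rewrite !inE => /orP[] /imsetP[[x|] p_u e_u]; subst e.
  - by rewrite (imset_f (fun x => edge r a_coord (Some x))) ?inE.
  - by move: p_u; rewrite inE orbF => ->; apply/orP; right; apply/set1P.
  - by apply/orP; left; apply/orP; right; apply/imsetP; exists x; rewrite ?inE.
  - by move: p_u; rewrite inE orbF => ->; apply/orP; right; apply/set1P.
apply: leq_trans (subset_leq_card R_sub) _.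
apply: leq_trans (leq_card_setU _ _).1 (leq_add _ _); last by case: p; rewrite ?cards1 ?cards0.
by apply: leq_trans (leq_card_setU _ _).1 (leq_add _ _); exact: leq_imset_card.
Qed.

Lemma near_XB x :
  x \in XB :|: boundary XB -> exists2 y, y \in XB & exists j : 'I_r, x = b_coord j y.
Proof.
case/setUP => [XBx|]; first by exists x => //; exists (Ordinal (ltnW (ltnW r_gt2))).
rewrite inE => /andP[_ /setUP[] /imsetP[y XBy ->]]; exists y => //.
  by exists (Ordinal (ltnW r_gt2)).
by exists (Ordinal r_gt2).
Qed.

Lemma disjoint_XA : [disjoint XA & XB :|: boundary XB].
Proof.
apply/pred0P => x /=; apply/negbTE/andP => -[XAx /near_XB[y XBy [j eq_x]]].
move: XAx XBy; rewrite !inE => XAx XBy.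
have := edge_a_b_meet eq_x; rewrite R_matching //.
by rewrite (eq_edge_a_b r_gt2 N_gt1).
Qed.

Lemma card_XA_XB_boundary : #|XA| + #|XB| + #|boundary XB| <= N.
Proof.
have disj_XB : [disjoint XB & boundary XB].
  by apply/pred0P => x /=; rewrite !inE andbA andbN.
rewrite -addnA; have := (leq_card_setU XB (boundary XB)).2; rewrite disj_XB => /eqP <-.
have := (leq_card_setU XA (XB :|: boundary XB)).2; rewrite disjoint_XA => /eqP <-.
by rewrite -[N in _ <= N](card_ord N) max_card.
Qed.

Lemma rainbow_bound : exists T : {set 'I_N},
  [/\ #|T| <= n - a, #|R| <= a + #|T| + p & #|R| + #|boundary T| <= N + p].
Proof.
exists XB; split; first exact: card_XB.
  by apply: leq_trans card_rainbow _; rewrite !leq_add2r card_XA.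
by have := card_rainbow; have := card_XA_XB_boundary; lia.
Qed.

End RainbowBound.

Lemma all_admit_le r N m D (p : bool) s :
  2 < r -> odd N -> 1 < N -> N <= 2 ^ m -> m * N * D <= (N./2 - D) * N./2 ->
  all_admit r (N + p) s -> s <= N + p - D.
Proof.
move=> r_gt2 N_odd N_gt1 le_N2m D_small admit_s.
set n := N + p; set b := N./2; pose a := n - b.
have [R [[_ [R_matching [phi [phi_inj phi_in]]]] <-]] :=
  admit_s _ _ (matchings r N p a (n:=n)) (hypergraph_partite _ _ _)
    (fun i => matchings_sub _ _ _ _ i) (fun i => @matching_matchings _ _ N_odd _ _ _ i)
    (fun i => card_matchings _ r_gt2 _ _ i).
have [T [card_T card_R card_R_boundary]] :=
  rainbow_bound r_gt2 N_odd N_gt1 (leq_subr b n) R_matching phi_inj phi_in.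
have expansion := boundary_expansion T N_odd le_N2m.
have N_eq : N = b.*2 + 1 by rewrite -[N in LHS](odd_double_half N) N_odd addnC.
have card_compl : #|~: T| = N - #|T| by have := cardsC T; rewrite card_ord; lia.
have m_gt0 : 0 < m by case: (posnP m) le_N2m => // ->; rewrite expn0; lia.
rewrite card_compl in expansion; move: card_T card_R card_R_boundary expansion.
rewrite /a /n; move: #|T| #|boundary T| #|R| (leq_b1 p).
move=> t e k le_p1 le_tb le_s le_se le_expansion.
have [le_tDb|lt_btD] := leqP (t + p + D) b; first lia.
have le_mND : m * N * D <= m * N * e.
  apply: leq_trans D_small (leq_trans (leq_mul (_ : b - D <= t) (_ : b <= N - t)) _); lia.
have le_De : D <= e by move: le_mND; rewrite leq_pmul2l // muln_gt0 m_gt0; lia.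
lia.
Qed.

Lemma g_le r n k : (forall s, all_admit r n s -> s <= k) -> g r n <= k.
Proof.
move=> admit_le; apply/bigmax_leqP => s; rewrite /pbool.
by case: excluded_middle_informative => [admit_s _|//]; exact: admit_le.
Qed.

Lemma exists_int_root r n :
  0 < r -> 6 ^ r <= n -> exists K, [/\ 6 <= K, K ^ r <= n & n < K.+1 ^ r].
Proof.
move=> r_gt0 le_6n.
have root_le_n k : k ^ r <= n -> k <= n.
  by case: k => // k; apply: leq_trans; rewrite -{1}(expn1 k.+1) leq_pexp2l.
have [K le_Kn K_max] := ex_maxnP (ex_intro (fun k => k ^ r <= n) 6 le_6n) root_le_n.
exists K; split => //; first exact: K_max.
by rewrite ltnNge; apply/negP => /K_max; rewrite ltnn.
Qed.

Lemma linear_lt_expn K r : 6 <= K -> 2 < r -> 6 * K * r < K ^ r.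
Proof.
move=> K_ge6; elim: r => // r IHr; rewrite ltnS leq_eqVlt => /orP[/eqP <-|r_gt2].
  by rewrite !expnS expn0 muln1; nia.
have := leq_mul K_ge6 (leqnn (K ^ r)); have := IHr r_gt2; rewrite expnS; nia.
Qed.

Lemma deficit_condition N m D : odd N -> 18 <= m -> 6 * m * D <= N ->
  m * N * D <= (N./2 - D) * N./2.
Proof.
move=> N_odd m_ge18 le_DN.
have N_eq : N = N./2.*2 + 1 by rewrite -[N in LHS](odd_double_half N) N_odd addnC.
move: N./2 N_eq => b N_eq.
have le_mN : 6 * (m * N * D) <= N * N by rewrite mulnAC !mulnA leq_mul2r le_DN orbT.
have le_DN' : 108 * D <= N by apply: leq_trans le_DN; apply: leq_mul => //; lia.
have le_Db : 108 * (D * b) <= N * b by rewrite mulnA leq_mul2r le_DN' orbT.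
rewrite mulnBl; rewrite N_eq in le_mN le_Db le_DN'.
nia.
Qed.

Lemma g_deficit r n : 2 < r -> 6 ^ r < n ->
  exists K D, [/\ 0 < K, K ^ r <= n, n <= 12 * r * K * D & g r n + D <= n].
Proof.
move=> r_gt2 lt_6n.
have [K [K_ge6 le_Kn lt_nK]] := exists_int_root (ltnW (ltnW r_gt2)) (ltnW lt_6n).
pose p := ~~ odd n; pose N := n - p; pose m := K * r; pose D := N %/ (6 * m).
have n_eq : n = N + p by rewrite /N subnK // /p; case: (odd n) => //; lia.
have N_odd : odd N by have := congr1 odd n_eq; rewrite oddD /p; case: (odd n) (odd N) => [] [].
have le_N2m : N <= 2 ^ m.
  apply: leq_trans (leq_subr _ _) (ltnW (leq_trans lt_nK _)).
  by rewrite /m expnM leq_exp2r ?(ltn_expl K (ltnSn 1)) // ltnW // ltnW.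
have m_ge18 : 18 <= m := leq_mul K_ge6 r_gt2.
have le_6mN : 6 * m <= N by have := linear_lt_expn K_ge6 r_gt2; rewrite /m mulnA; lia.
have D_gt0 : 0 < D by rewrite divn_gt0 // muln_gt0 muln_gt0; lia.
have le_6mDN : 6 * m * D <= N by rewrite mulnC leq_trunc_div.
have lt_N6mD : N < 6 * m * D.+1 by rewrite mulnC ltn_ceil // !muln_gt0; lia.
exists K, D; split => //; first lia.
  by rewrite -(mulnA 12 r K) (mulnC r K) -/m; have := leq_pmulr m D_gt0; lia.
have le_DN : D <= N by rewrite leq_div.
suff : g r n <= n - D by lia.
apply: g_le => s; rewrite n_eq.
by apply: all_admit_le r_gt2 N_odd _ le_N2m (deficit_condition N_odd m_ge18 le_6mDN); lia.
Qed.

Lemma pow_expn a b : Nat.pow a b = a ^ b.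
Proof. by elim: b => //= b ->; rewrite expnS. Qed.

(* Loaded only now: Reals rebinds [^] on nat to [Nat.pow]. *)
From Stdlib Require Import Reals Lra.
Open Scope R_scope.

Lemma Rpower_root_mul_le (n K r : nat) :
  (0 < K)%nat -> (0 < r)%nat -> (expn K r <= n)%nat ->
  Rpower (INR n) ((INR r - 1) / INR r) * INR K <= INR n.
Proof.
move=> /ltP/lt_0_INR K_pos /ltP/lt_0_INR r_pos /leP/le_INR; rewrite -pow_expn pow_INR => le_Kn.
have n_pos : 0 < INR n by apply: Rlt_le_trans (pow_lt _ _ K_pos) le_Kn.
have le_K_root : INR K <= Rpower (INR n) (/ INR r).
  rewrite -[INR K](Rpower_1 _ K_pos) -(Rinv_r (INR r)); last lra.
  rewrite -Rpower_mult Rpower_pow //; apply: Rle_Rpower_l; first by left; apply: Rinv_0_lt_compat.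
  by split; first exact: pow_lt.
apply: Rle_trans (Rmult_le_compat_l _ _ _ (Rlt_le _ _ (exp_pos _)) le_K_root) _.
rewrite -Rpower_plus (_ : _ + _ = 1); first by rewrite Rpower_1 //; lra.
by field; lra.
Qed.

Theorem theorem1p7 (r n : nat) :
  (3 <= r)%nat -> (6 ^ r < n)%nat ->
  INR (g r n) <= INR n - / (12 * INR r) * Rpower (INR n) ((INR r - 1) / INR r).
Proof.
rewrite pow_expn => r_gt2 lt_6n.
have [K [D [K_gt0 le_Kn le_n12 le_g]]] := g_deficit r_gt2 lt_6n.
have r_gt0 : (0 < r)%nat := ltnW (ltnW r_gt2).
have r_pos : 0 < INR r by apply/lt_0_INR/ltP.
have le_root := Rpower_root_mul_le K_gt0 r_gt0 le_Kn.
have K_pos : 0 < INR K by apply/lt_0_INR/ltP.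
have le_gD : INR (g r n) + INR D <= INR n by rewrite -plus_INR; apply/le_INR/leP.
have le_n12R : INR n <= 12 * INR r * INR K * INR D.
  by move/leP/le_INR: le_n12; rewrite !mult_INR [INR 12]INR_IZR_INZ.
set P := Rpower _ _ in le_root *.
have le_P : P <= 12 * INR r * INR D.
  by apply: (Rmult_le_reg_r (INR K)) => //; lra.
have le_PD : / (12 * INR r) * P <= INR D.
  apply: (Rmult_le_reg_l (12 * INR r)); first lra.
  by rewrite -Rmult_assoc Rinv_r ?Rmult_1_l; lra.
lra.
Qed.
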